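(* Consider $N$ advertisers with click-through rates $c_i\in(0,1]$, abandonment probabilities $\gamma_i\ge0$, $\mu_i=c_i+\gamma_i\le 1$, and a fixed bid vector $(b_1,\dots,b_N)$, indexed in descending order of $\frac{b_ic_i}{\mu_i}$. Both the CE mechanism and the VCG mechanism rank the ads in this order. In the CE mechanism the ad at position $i$ pays per click $p_i^{CE}=\frac{b_{i+1}c_{i+1}\mu_i}{\mu_{i+1}c_i}$ (with $b_{N+1}=0$); in the VCG mechanism it pays per click $$p_i^{V}=\frac{\mu_i}{c_i}\sum_{j=i+1}^{N}b_jc_j\prod_{k=i+1}^{j-1}(1-\mu_k).$$ Then the search engine's expected revenue $\sum_{i=1}^N p_i\,c_i\prod_{l<i}(1-\mu_l)$ under the CE mechanism is greater than or equal to that under the VCG mechanism.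
   Context: Click model: users view ads top to bottom; having viewed the ad at position $i$ the user clicks it with probability $c_i$, abandons with probability $\gamma_i$, and otherwise moves on, so the ad at position $i$ is clicked with probability $c_i\prod_{l<i}(1-\mu_l)$. The VCG price above is the per-click version of the expected loss in value (measured by bids) that the ad at position $i$ imposes on the ads below it. *)

(* R is an abstract real field. Positions are 0-based: 0..N-1. *)
From mathcomp Require Import all_boot all_order all_algebra.
Set Implicit Arguments. Unset Strict Implicit. Unset Printing Implicit Defensive.
Import Order.TTheory GRing.Theory Num.Theory.
Local Open Scope ring_scope.

Section Auction.
Variables (R : realFieldType) (N : nat) (b c g : nat -> R).

Definition mu (i : nat) : R := c i + g i.

(* probability that the ad at position i is viewed: prod_{l<i} (1 - mu_l) *)
Definition reach (i : nat) : R := \prod_(0 <= l < i) (1 - mu l).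

(* CE price per click; b_{N+1} = 0 convention (0-based: b_N = 0) *)
Definition bid (i : nat) : R := if (i < N)%N then b i else 0.
Definition pCE (i : nat) : R :=
  bid i.+1 * c i.+1 * mu i / (mu i.+1 * c i).

Definition pVCG (i : nat) : R :=
  mu i / c i * \sum_(i.+1 <= j < N) b j * c j * \prod_(i.+1 <= k < j) (1 - mu k).

Definition revenue (p : nat -> R) : R :=
  \sum_(0 <= i < N) p i * c i * reach i.

End Auction.

(* The VCG price is [pVCG i = mu_i / c_i * E (i+1)], where the externality
   [E a] obeys [E a = b_a c_a + (1 - mu_a) E (a+1)] and [E N = 0].  Writing
   [b_a c_a = mu_a r_a] with [r_a = b_a c_a / mu_a], this is a convex combination
   of [r_a] and [E (a+1)], so [E a] never exceeds a common bound of the ratios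
   [r_j], [j >= a].  As the ratios decrease, [E (i+1) <= r_(i+1)], which is
   exactly [pVCG i <= pCE i]; the revenues then compare term by term. *)
From mathcomp Require Import all_boot all_order all_algebra.
From mathcomp Require Import ring lra zify.
Set Implicit Arguments. Unset Strict Implicit. Unset Printing Implicit Defensive.
Import Order.TTheory GRing.Theory Num.Theory.
Local Open Scope ring_scope.

Section Externality.
Variables (R : realFieldType) (N : nat) (b c g : nat -> R).
Hypothesis mu_gt0_le1 : forall j, (j < N)%N -> 0 < mu c g j <= 1.

Definition externality (a : nat) : R :=
  \sum_(a <= j < N) b j * c j * \prod_(a <= k < j) (1 - mu c g k).

Definition value_ratio (j : nat) : R := b j * c j / mu c g j.

Lemma externality_geq a : (N <= a)%N -> externality a = 0.
Proof. by move=> Na; rewrite /externality big_geq. Qed.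

Lemma externality_rec a : (a < N)%N ->
  externality a = b a * c a + (1 - mu c g a) * externality a.+1.
Proof.
move=> aN; rewrite /externality big_ltn // big_geq // mulr1 mulr_sumr.
congr (_ + _); apply: eq_big_nat => j /andP[aj _].
by rewrite big_ltn //; ring.
Qed.

Lemma externality_le (r : R) a : 0 <= r ->
  (forall j, (a <= j < N)%N -> value_ratio j <= r) -> externality a <= r.
Proof.
move=> r_ge0; move Ena : (N - a)%N => n; elim: n a Ena => [|n IH] a Ena ratio_le.
  by rewrite externality_geq //; lia.
have aN : (a < N)%N by lia.
have /andP[mu_gt0 mu_le1] := mu_gt0_le1 aN.
have Vnext : externality a.+1 <= r.
  by apply: IH => [|j /andP[aj jN]]; [lia | apply: ratio_le; lia].
have bc_le : b a * c a <= r * mu c g a.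
  rewrite -ler_pdivrMr //; apply: ratio_le; lia.
rewrite externality_rec //.
have : (1 - mu c g a) * externality a.+1 <= (1 - mu c g a) * r.
  by apply: ler_wpM2l; lra.
lra.
Qed.

End Externality.

Lemma reach_ge0 (R : realFieldType) (c g : nat -> R) i :
  (forall l, (l < i)%N -> mu c g l <= 1) -> 0 <= reach c g i.
Proof.
move=> mu_le1; rewrite /reach big_nat_cond.
by apply: prodr_ge0 => l /andP[/andP[_ li] _]; have := mu_le1 l li; lra.
Qed.

Lemma pCE_value_ratio (R : realFieldType) N (b c g : nat -> R) i :
  (i.+1 < N)%N -> pCE N b c g i = mu c g i / c i * value_ratio b c g i.+1.
Proof. by move=> iN; rewrite /pCE /bid iN /value_ratio invfM; ring. Qed.

Lemma pVCG_le_pCE (R : realFieldType) N (b c g : nat -> R) i :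
  (forall j, (j < N)%N -> 0 < mu c g j <= 1) ->
  (forall j, (i < j)%N -> (j < N)%N -> value_ratio b c g j <= value_ratio b c g i.+1) ->
  (forall j, (j < N)%N -> 0 <= value_ratio b c g j) ->
  0 < c i -> 0 < mu c g i -> pVCG N b c g i <= pCE N b c g i.
Proof.
move=> mu01 ratio_dec ratio_ge0 ci_gt0 mui_gt0.
rewrite /pVCG -/(externality N b c g i.+1).
have [iN | Ni] := ltnP i.+1 N.
  rewrite pCE_value_ratio //; apply: ler_wpM2l; first exact/ltW/divr_gt0.
  by apply: externality_le => // [|j /andP[ij jN]]; [exact: ratio_ge0 | exact: ratio_dec].
by rewrite externality_geq // mulr0 /pCE /bid ltnNge Ni !mul0r.
Qed.

Theorem theorem4 (R : realFieldType) (N : nat) (b c g : nat -> R)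
  (hc : forall i, (i < N)%N -> 0 < c i <= 1)
  (hg : forall i, (i < N)%N -> 0 <= g i)
  (hmu : forall i, (i < N)%N -> mu c g i <= 1)
  (hb : forall i, (i < N)%N -> 0 <= b i)
  (hord : forall i j, (i <= j)%N -> (j < N)%N ->
     b j * c j / mu c g j <= b i * c i / mu c g i) :
  revenue N c g (pVCG N b c g) <= revenue N c g (pCE N b c g).
Proof.
have mu_gt0 j : (j < N)%N -> 0 < mu c g j.
  by move=> jN; have /andP[cj _] := hc j jN; have := hg j jN; rewrite /mu; lra.
have mu01 j : (j < N)%N -> 0 < mu c g j <= 1 by move=> jN; rewrite mu_gt0 ?hmu.
have ratio_ge0 j : (j < N)%N -> 0 <= value_ratio b c g j.
  move=> jN; have /andP[cj _] := hc j jN.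
  by rewrite /value_ratio divr_ge0 ?mulr_ge0 ?hb ?ltW ?mu_gt0.
rewrite /revenue; apply: ler_sum_nat => i /andP[_ iN].
have /andP[ci_gt0 _] := hc i iN.
apply: ler_wpM2r; first by apply: reach_ge0 => l li; apply: hmu; lia.
apply: ler_wpM2r; first exact: ltW.
apply: (pVCG_le_pCE mu01 _ ratio_ge0 ci_gt0 (mu_gt0 i iN)).
by move=> j ij jN; apply: hord.
Qed.
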